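(* Let $n\ge1$, $0<\hat\theta<1$ with $n\hat\theta$ an integer, and $\alpha>0$. Define $\Delta=\tfrac12\log(n+1)-H_n(\hat\theta)$ and suppose $\alpha+\Delta\le n\hat\theta^2(1-\hat\theta)^2/8$. Then there is a solution $\gamma_\alpha>0$ of $-\log P_{\mathrm{PBR},n}\big(\hat\theta\,\big|\,\varphi(\gamma_\alpha,\hat\theta)\big)=\alpha$ satisfying $$\gamma_\alpha\in\sqrt{2(\alpha+\Delta)}\left(1+\frac52\frac{\sqrt{\alpha+\Delta}}{\sqrt{n\hat\theta(1-\hat\theta)}}[-1,1]\right)^{-1/2},$$ i.e. $\sqrt{2(\alpha+\Delta)}(1+\epsilon)^{-1/2}\le\gamma_\alpha\le\sqrt{2(\alpha+\Delta)}(1-\epsilon)^{-1/2}$ with $\epsilon=\frac52\sqrt{\alpha+\Delta}/\sqrt{n\hat\theta(1-\hat\theta)}$.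
   Context: Logarithms are natural. $H_n(t)=-nt\log t-n(1-t)\log(1-t)-\log\binom{n}{nt}-\tfrac12\log(n+1)$. $P_{\mathrm{PBR},n}(t|\varphi)=\varphi^{nt}(1-\varphi)^{n(1-t)}(n+1)\binom{n}{nt}$ if $t\ge\varphi$, and $=t^{nt}(1-t)^{n(1-t)}(n+1)\binom{n}{nt}$ otherwise. With $\hat\sigma=\sqrt{\hat\theta(1-\hat\theta)/n}$, $\varphi(\gamma,\hat\theta)=\hat\theta-\hat\sigma\gamma$. *)

From Stdlib Require Import Reals Lra ZArith.
Open Scope R_scope.

(* n*t as a natural number; meaningful when n*t is a nonnegative integer
   (the only case used by the statement). *)
Definition nt (n : nat) (t : R) : nat := Z.to_nat (Int_part (INR n * t)).

Definition binomR (n : nat) (t : R) : R := C n (nt n t).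

Definition Hn (n : nat) (t : R) : R :=
  - INR n * t * ln t - INR n * (1 - t) * ln (1 - t)
  - ln (binomR n t) - / 2 * ln (INR n + 1).

(* P_PBR,n(t | phi); the exponents n t and n(1-t) are the integers nt and n - nt. *)
Definition P_PBR (n : nat) (t phi : R) : R :=
  if Rle_dec phi t then
    phi ^ (nt n t) * (1 - phi) ^ (n - nt n t) * (INR n + 1) * binomR n t
  else
    t ^ (nt n t) * (1 - t) ^ (n - nt n t) * (INR n + 1) * binomR n t.

Definition sigma_hat (n : nat) (th : R) : R := sqrt (th * (1 - th) / INR n).

Definition phiPBR (n : nat) (g th : R) : R := th - sigma_hat n th * g.

Definition DeltaPBR (n : nat) (th : R) : R := / 2 * ln (INR n + 1) - Hn n th.

From Coquelicot Require Import Coquelicot.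
From Stdlib Require Import Reals Lra ZArith Lia Ranalysis5.
Open Scope R_scope.

(* Taking logarithms, -ln P_PBR(theta | theta - d) = n KL(theta, theta - d) - Delta,
   and Delta = ln P_PBR(theta | theta) >= 0 because the binomial probability at its
   mode n theta is at least 1/(n+1).  Third-order Taylor bounds on ln(1 -+ x) give
   n KL(theta, theta - sigma g) = g^2/2 + O(g^3 / sqrt(n theta (1 - theta))), and the
   cubic error is small enough that n KL - Delta - alpha changes sign between the two
   endpoints of the claimed interval; the intermediate value theorem gives gamma. *)

Lemma le_at_0_of_derive_nonpos (h dh : R -> R) (x : R) : 0 <= x ->
  (forall c, 0 <= c <= x -> is_derive h c (dh c)) ->
  (forall c, 0 <= c <= x -> dh c <= 0) -> h x <= h 0.
Proof.
  intros Hx Hd Hneg.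
  destruct (MVT_gen h 0 x dh) as [c [Hc Heq]];
    rewrite ?Rmin_left, ?Rmax_right in * by lra.
  - intros y Hy. apply Hd. lra.
  - intros y Hy. apply continuity_pt_filterlim.
    apply (ex_derive_continuous (K:=R_AbsRing) (V:=R_NormedModule)).
    eexists. apply Hd. lra.
  - assert (dh c <= 0) by (apply Hneg; lra). nra.
Qed.

Lemma ln_1_sub_le x : 0 <= x < 1 -> ln (1 - x) <= - x - x^2/2 - x^3/3.
Proof.
  intros Hx.
  assert (H : ln (1 - x) + x + x^2/2 + x^3/3 <= ln (1 - 0) + 0 + 0^2/2 + 0^3/3).
  { apply (le_at_0_of_derive_nonpos (fun t => ln (1 - t) + t + t^2/2 + t^3/3)
                                    (fun t => - (t^3 / (1 - t)))); [lra| |].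
    - intros c Hc. auto_derive; [lra|]. field. lra.
    - intros c Hc. rewrite <- Ropp_0; apply Ropp_le_contravar, Rdiv_le_0_compat; [|lra].
      apply pow_le; lra. }
  rewrite !Rminus_0_r, ln_1 in H. lra.
Qed.

Lemma ln_1_sub_ge x : 0 <= x <= 1/4 -> - x - x^2/2 - 4/9 * x^3 <= ln (1 - x).
Proof.
  intros Hx.
  assert (H : - ln (1 - x) - x - x^2/2 - 4/9 * x^3
              <= - ln (1 - 0) - 0 - 0^2/2 - 4/9 * 0^3).
  { apply (le_at_0_of_derive_nonpos (fun t => - ln (1 - t) - t - t^2/2 - 4/9 * t^3)
             (fun t => - (t^2 * (4/3 * (1 - t) - 1) / (1 - t)))); [lra| |].
    - intros c Hc. auto_derive; [lra|]. field. lra.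
    - intros c Hc. rewrite <- Ropp_0; apply Ropp_le_contravar, Rdiv_le_0_compat; [|lra].
      assert (0 <= c^2) by (apply pow_le; lra). nra. }
  rewrite !Rminus_0_r, ln_1 in H. lra.
Qed.

Lemma ln_1_add_le y : 0 <= y -> ln (1 + y) <= y - y^2/2 + y^3/3.
Proof.
  intros Hy.
  assert (H : ln (1 + y) - y + y^2/2 - y^3/3 <= ln (1 + 0) - 0 + 0^2/2 - 0^3/3).
  { apply (le_at_0_of_derive_nonpos (fun t => ln (1 + t) - t + t^2/2 - t^3/3)
                                    (fun t => - (t^3 / (1 + t)))); [lra| |].
    - intros c Hc. auto_derive; [lra|]. field. lra.
    - intros c Hc. rewrite <- Ropp_0; apply Ropp_le_contravar, Rdiv_le_0_compat; [|lra].
      apply pow_le; lra. }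
  rewrite !Rplus_0_r, ln_1 in H. lra.
Qed.

Lemma ln_1_add_ge y : 0 <= y -> y - y^2/2 <= ln (1 + y).
Proof.
  intros Hy.
  assert (H : - ln (1 + y) + y - y^2/2 <= - ln (1 + 0) + 0 - 0^2/2).
  { apply (le_at_0_of_derive_nonpos (fun t => - ln (1 + t) + t - t^2/2)
                                    (fun t => - (t^2 / (1 + t)))); [lra| |].
    - intros c Hc. auto_derive; [lra|]. field. lra.
    - intros c Hc. rewrite <- Ropp_0; apply Ropp_le_contravar, Rdiv_le_0_compat; [|lra].
      apply pow_le; lra. }
  rewrite !Rplus_0_r, ln_1 in H. lra.
Qed.

Lemma binom_coef_pos n j : 0 < C n j.
Proof.
  unfold C. apply Rdiv_lt_0_compat; [apply lt_0_INR, lt_O_fact|].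
  apply Rmult_lt_0_compat; apply lt_0_INR, lt_O_fact.
Qed.

Lemma unimodal_le_mode (f : nat -> R) (k m : nat) :
  (forall j, (j < k)%nat -> f j <= f (S j)) ->
  (forall j, (k <= j < m)%nat -> f (S j) <= f j) ->
  forall j, (j <= m)%nat -> f j <= f k.
Proof.
  intros Hup Hdown j Hj. destruct (Nat.le_gt_cases j k) as [Hjk|Hkj].
  - assert (Hchain : forall i, (j <= i <= k)%nat -> f j <= f i).
    { induction i as [|i IH]; intros Hi.
      - replace j with 0%nat by lia. lra.
      - destruct (Nat.eq_dec j (S i)) as [->|Hne]; [lra|].
        specialize (IH ltac:(lia)). specialize (Hup i ltac:(lia)). lra. }
    apply Hchain. lia.
  - assert (Hchain : forall i, (k <= i <= m)%nat -> f i <= f k).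
    { induction i as [|i IH]; intros Hi.
      - replace k with 0%nat by lia. lra.
      - destruct (Nat.eq_dec k (S i)) as [->|Hne]; [lra|].
        specialize (IH ltac:(lia)). specialize (Hdown i ltac:(lia)). lra. }
    apply Hchain. lia.
Qed.

(* The ratio of consecutive binomial probabilities is (n - j) p / ((j + 1) (1 - p)),
   which is >= 1 exactly while j + 1 - p <= n p. *)
Lemma binomial_pmf_le_mode n k p : 0 < p < 1 -> INR k = INR n * p ->
  forall j, (j <= n)%nat ->
  C n j * p ^ j * (1 - p) ^ (n - j) <= C n k * p ^ k * (1 - p) ^ (n - k).
Proof.
  intros Hp Hk.
  set (b := fun j => C n j * p ^ j * (1 - p) ^ (n - j)).
  assert (Hb : forall j, 0 < b j).
  { intros j. unfold b. pose proof (binom_coef_pos n j).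
    pose proof (pow_lt p j ltac:(lra)). pose proof (pow_lt (1 - p) (n - j) ltac:(lra)).
    apply Rmult_lt_0_compat; [apply Rmult_lt_0_compat|]; lra. }
  assert (Hratio : forall j, (j < n)%nat ->
            b (S j) * ((INR j + 1) * (1 - p)) = b j * ((INR n - INR j) * p)).
  { intros j Hj. unfold b. rewrite pascal_step3, <- minus_INR, <- S_INR by lia.
    replace (n - j)%nat with (S (n - S j)) by lia. simpl pow.
    assert (INR (S j) <> 0) by (apply not_0_INR; lia). field. auto. }
  assert (Hkn : (k <= n)%nat) by (apply INR_le; rewrite Hk; pose proof (pos_INR n); nra).
  apply (unimodal_le_mode b k n).
  - intros j Hj. pose proof (Hratio j ltac:(lia)) as E. pose proof (Hb j).
    assert (INR j + 1 <= INR k) by (rewrite <- S_INR; apply le_INR; lia).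
    assert (0 < (INR j + 1) * (1 - p)) by (pose proof (pos_INR j); nra).
    assert ((INR j + 1) * (1 - p) <= (INR n - INR j) * p) by nra.
    apply (Rmult_le_reg_r ((INR j + 1) * (1 - p))); nra.
  - intros j Hj. pose proof (Hratio j ltac:(lia)) as E. pose proof (Hb j).
    assert (INR k <= INR j) by (apply le_INR; lia).
    assert (0 < (INR j + 1) * (1 - p)) by (pose proof (pos_INR j); nra).
    assert ((INR n - INR j) * p <= (INR j + 1) * (1 - p)) by nra.
    apply (Rmult_le_reg_r ((INR j + 1) * (1 - p))); nra.
Qed.

Lemma binomial_pmf_mode_ge n k p : 0 < p < 1 -> INR k = INR n * p ->
  1 <= (INR n + 1) * (C n k * p ^ k * (1 - p) ^ (n - k)).
Proof.
  intros Hp Hk.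
  assert (Hsum : sum_f_R0 (fun j => C n j * p ^ j * (1 - p) ^ (n - j)) n = 1).
  { rewrite <- binomial. replace (p + (1 - p)) with 1 by ring. apply pow1. }
  pose proof (sum_Rle _ _ n (binomial_pmf_le_mode n k p Hp Hk)) as Hle.
  rewrite Hsum, sum_cte, S_INR in Hle. lra.
Qed.

Definition klBern (t p : R) : R :=
  t * ln (t / p) + (1 - t) * ln ((1 - t) / (1 - p)).

Lemma klBern_shift t d : 0 < t < 1 -> 0 <= d < t ->
  klBern t (t - d) = - t * ln (1 - d / t) - (1 - t) * ln (1 + d / (1 - t)).
Proof.
  intros Ht Hd. unfold klBern.
  assert (d / t < 1) by (apply (proj1 (Rdiv_lt_1 d t ltac:(lra))); lra).
  assert (0 <= d / (1 - t)) by (apply Rdiv_le_0_compat; lra).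
  replace (t - d) with (t * (1 - d / t)) by (field; lra).
  replace (1 - t * (1 - d / t)) with ((1 - t) * (1 + d / (1 - t))) by (field; lra).
  rewrite !ln_div, !ln_mult by (try apply Rmult_lt_0_compat; lra). ring.
Qed.

Lemma klBern_shift_upper t d : 0 < t < 1 -> 0 <= d <= t / 4 ->
  klBern t (t - d) <= d ^ 2 / (2 * (t * (1 - t))) + 4 / 9 * d ^ 3 / t ^ 2.
Proof.
  intros Ht Hd. rewrite klBern_shift by lra.
  assert (Hu : 0 <= d / t <= 1 / 4).
  { split; [apply Rdiv_le_0_compat; lra|].
    apply (Rmult_le_reg_r t); [lra|]. field_simplify; lra. }
  assert (Hv : 0 <= d / (1 - t)) by (apply Rdiv_le_0_compat; lra).
  pose proof (ln_1_sub_ge _ Hu) as Lu. pose proof (ln_1_add_ge _ Hv) as Lv.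
  apply Rle_trans with
    (t * (d / t + (d / t) ^ 2 / 2 + 4 / 9 * (d / t) ^ 3)
     - (1 - t) * (d / (1 - t) - (d / (1 - t)) ^ 2 / 2)); [nra|].
  right. field. lra.
Qed.

Lemma klBern_shift_lower t d : 0 < t < 1 -> 0 <= d < t ->
  d ^ 2 / (2 * (t * (1 - t))) - d ^ 3 / (3 * (1 - t) ^ 2) <= klBern t (t - d).
Proof.
  intros Ht Hd. rewrite klBern_shift by lra.
  assert (Hu : 0 <= d / t < 1).
  { split; [apply Rdiv_le_0_compat | apply (proj1 (Rdiv_lt_1 d t ltac:(lra)))]; lra. }
  assert (Hv : 0 <= d / (1 - t)) by (apply Rdiv_le_0_compat; lra).
  pose proof (ln_1_sub_le _ Hu) as Lu. pose proof (ln_1_add_le _ Hv) as Lv.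
  assert (0 <= (d / t) ^ 3) by (apply pow_le; lra).
  apply Rle_trans with
    (t * (d / t + (d / t) ^ 2 / 2 + (d / t) ^ 3 / 3)
     - (1 - t) * (d / (1 - t) - (d / (1 - t)) ^ 2 / 2 + (d / (1 - t)) ^ 3 / 3)); [|nra].
  replace (t * (d / t + (d / t) ^ 2 / 2 + (d / t) ^ 3 / 3)
     - (1 - t) * (d / (1 - t) - (d / (1 - t)) ^ 2 / 2 + (d / (1 - t)) ^ 3 / 3))
    with (d ^ 2 / (2 * (t * (1 - t))) - d ^ 3 / (3 * (1 - t) ^ 2) + t * ((d / t) ^ 3 / 3))
    by (field; lra).
  nra.
Qed.

Lemma nt_of_integral n t z : 0 < t -> INR n * t = IZR z -> INR (nt n t) = INR n * t.
Proof.
  intros Ht Hz. assert (0 <= IZR z) by (rewrite <- Hz; pose proof (pos_INR n); nra).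
  unfold nt. rewrite Hz, <- (Int_part_spec (IZR z) z) by lra.
  rewrite INR_IZR_INZ, Z2Nat.id by (apply le_IZR; lra). reflexivity.
Qed.

Section Likelihood.

Variables (n : nat) (t : R).
Hypotheses (Ht : 0 < t < 1) (Hk : INR (nt n t) = INR n * t).

Lemma nt_le : (nt n t <= n)%nat.
Proof. apply INR_le. rewrite Hk. pose proof (pos_INR n). nra. Qed.

Lemma neg_ln_P_PBR p : 0 < p <= t ->
  - ln (P_PBR n t p) = INR n * klBern t p - DeltaPBR n t.
Proof.
  intros Hp. pose proof (binom_coef_pos n (nt n t)).
  pose proof (pow_lt p (nt n t) ltac:(lra)).
  pose proof (pow_lt (1 - p) (n - nt n t) ltac:(lra)).
  assert (0 < INR n + 1) by (pose proof (pos_INR n); lra).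
  unfold P_PBR, DeltaPBR, Hn, klBern, binomR.
  destruct (Rle_dec p t) as [_|]; [|lra].
  rewrite !ln_mult, !ln_pow, !ln_div, minus_INR, Hk
    by (try apply nt_le; try assumption; repeat apply Rmult_lt_0_compat; lra).
  lra.
Qed.

Lemma DeltaPBR_ge0 : 0 <= DeltaPBR n t.
Proof.
  assert (Hmode := neg_ln_P_PBR t ltac:(lra)).
  unfold klBern in Hmode. rewrite !Rdiv_diag, ln_1 in Hmode by lra.
  unfold P_PBR, binomR in Hmode. destruct (Rle_dec t t) as [_|]; [|lra].
  pose proof (binomial_pmf_mode_ge n (nt n t) t Ht Hk) as Hge.
  rewrite <- ln_1. apply Rle_trans with (ln (t ^ nt n t * (1 - t) ^ (n - nt n t)
    * (INR n + 1) * C n (nt n t))); [apply ln_le; lra|lra].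
Qed.

End Likelihood.

Lemma sqrt_pos_sq x : 0 < x -> 0 < sqrt x /\ sqrt x ^ 2 = x.
Proof. intros Hx. split; [apply sqrt_lt_R0 | apply pow2_sqrt]; lra. Qed.

Lemma sqrt_div_sqrt_sq A B : 0 <= A -> 0 < B -> (sqrt A / sqrt B) ^ 2 * B = A.
Proof.
  intros HA HB. assert (0 < sqrt B) by (apply sqrt_lt_R0; lra).
  unfold Rdiv. rewrite Rpow_mult_distr, pow_inv, !pow2_sqrt by lra. field. lra.
Qed.

Section Scaling.

Variables (n : nat) (t : R).
Hypotheses (Hn : (1 <= n)%nat) (Ht : 0 < t < 1).

Lemma variance_scale_pos : 0 < INR n * t * (1 - t).
Proof.
  assert (0 < INR n) by (apply lt_0_INR; lia).
  apply Rmult_lt_0_compat; [apply Rmult_lt_0_compat|]; lra.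
Qed.

Lemma sigma_hat_eq : sigma_hat n t = t * (1 - t) / sqrt (INR n * t * (1 - t)).
Proof.
  assert (0 < INR n) by (apply lt_0_INR; lia).
  assert (0 < t * (1 - t)) by nra.
  destruct (sqrt_pos_sq _ variance_scale_pos) as [Hr _].
  apply (Rmult_eq_reg_r (sqrt (INR n * t * (1 - t)))); [|lra].
  unfold sigma_hat. rewrite <- sqrt_mult by (try apply Rdiv_le_0_compat; nra).
  replace (t * (1 - t) / INR n * (INR n * t * (1 - t))) with ((t * (1 - t)) ^ 2)
    by (field; lra).
  rewrite sqrt_pow2 by lra. field. lra.
Qed.

Lemma phiPBR_in_range g : 0 <= g -> (1 - t) * g < sqrt (INR n * t * (1 - t)) ->
  0 < phiPBR n g t <= t.
Proof.
  intros Hg Hsmall. unfold phiPBR. rewrite sigma_hat_eq.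
  set (r := sqrt (INR n * t * (1 - t))) in *.
  assert (Hr : 0 < r) by (apply (Rle_lt_trans _ ((1 - t) * g)); nra).
  replace (t * (1 - t) / r * g) with (t * ((1 - t) * g / r)) by (field; lra).
  assert (0 <= (1 - t) * g / r < 1).
  { split; [apply Rdiv_le_0_compat; nra|].
    apply (proj1 (Rdiv_lt_1 _ _ Hr)). lra. }
  nra.
Qed.

Lemma scaled_klBern_upper g : 0 <= g -> (1 - t) * g <= sqrt (INR n * t * (1 - t)) / 4 ->
  INR n * klBern t (phiPBR n g t)
  <= g ^ 2 / 2 + 4 / 9 * (1 - t) ^ 2 * g ^ 3 / sqrt (INR n * t * (1 - t)).
Proof.
  intros Hg Hsmall.
  destruct (sqrt_pos_sq _ variance_scale_pos) as [Hr Hr2].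
  unfold phiPBR. rewrite sigma_hat_eq.
  set (r := sqrt (INR n * t * (1 - t))) in *.
  replace (INR n) with (r ^ 2 / (t * (1 - t))) by (rewrite Hr2; field; lra).
  apply Rle_trans with (r ^ 2 / (t * (1 - t)) *
    ((t * (1 - t) / r * g) ^ 2 / (2 * (t * (1 - t))) + 4 / 9 * (t * (1 - t) / r * g) ^ 3 / t ^ 2)).
  - apply Rmult_le_compat_l; [apply Rdiv_le_0_compat; nra|].
    apply klBern_shift_upper; [lra|].
    replace (t * (1 - t) / r * g) with (t * ((1 - t) * g / r)) by (field; lra).
    assert (0 <= (1 - t) * g / r <= 1 / 4).
    { split; [apply Rdiv_le_0_compat; nra|].
      apply (Rmult_le_reg_r r); [lra|]. field_simplify; lra. }
    nra.
  - right. field. lra.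
Qed.

Lemma scaled_klBern_lower g : 0 <= g -> (1 - t) * g < sqrt (INR n * t * (1 - t)) ->
  g ^ 2 / 2 - t ^ 2 * g ^ 3 / (3 * sqrt (INR n * t * (1 - t)))
  <= INR n * klBern t (phiPBR n g t).
Proof.
  intros Hg Hsmall. pose proof (phiPBR_in_range g Hg Hsmall) as Hphi.
  destruct (sqrt_pos_sq _ variance_scale_pos) as [Hr Hr2].
  unfold phiPBR in *. rewrite sigma_hat_eq in *.
  set (r := sqrt (INR n * t * (1 - t))) in *.
  replace (INR n) with (r ^ 2 / (t * (1 - t))) by (rewrite Hr2; field; lra).
  apply Rle_trans with (r ^ 2 / (t * (1 - t)) *
    ((t * (1 - t) / r * g) ^ 2 / (2 * (t * (1 - t)))
     - (t * (1 - t) / r * g) ^ 3 / (3 * (1 - t) ^ 2))).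
  - right. field. lra.
  - apply Rmult_le_compat_l; [apply Rdiv_le_0_compat; nra|].
    apply klBern_shift_lower; [lra|].
    split; [|lra]. apply Rmult_le_pos; [apply Rdiv_le_0_compat|]; nra.
Qed.

Lemma scaled_klBern_continuous g : 0 <= g -> (1 - t) * g < sqrt (INR n * t * (1 - t)) ->
  continuity_pt (fun x => INR n * klBern t (phiPBR n x t)) g.
Proof.
  intros Hg Hsmall. pose proof (phiPBR_in_range g Hg Hsmall) as Hphi.
  assert (Hder : ex_derive (fun x => INR n * klBern t (phiPBR n x t)) g).
  { unfold phiPBR in *. unfold klBern. auto_derive.
    repeat split; try apply Rdiv_lt_0_compat; lra. }
  apply continuity_pt_filterlim.
  exact (ex_derive_continuous (K:=R_AbsRing) (V:=R_NormedModule) _ g Hder).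
Qed.

Lemma scaled_klBern_attains c lo hi : 0 <= lo < hi ->
  (1 - t) * hi < sqrt (INR n * t * (1 - t)) ->
  INR n * klBern t (phiPBR n lo t) < c < INR n * klBern t (phiPBR n hi t) ->
  exists g, lo <= g <= hi /\ INR n * klBern t (phiPBR n g t) = c.
Proof.
  intros Hlohi Hsmall Hc.
  assert (Hcont : forall g, lo <= g <= hi ->
            continuity_pt (fun x => INR n * klBern t (phiPBR n x t) - c) g).
  { intros g Hg. apply continuity_pt_minus.
    - apply scaled_klBern_continuous; nra.
    - apply continuity_pt_const. intros ? ?. reflexivity. }
  destruct (IVT_interv _ lo hi Hcont ltac:(lra) ltac:(lra) ltac:(lra)) as [g [Hg Hgc]].
  exists g. split; [exact Hg | lra].
Qed.

End Scaling.

Lemma mul_one_sub_le_quarter t : t * (1 - t) <= 1 / 4.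
Proof. pose proof (pow2_ge_0 (t - 1 / 2)). nra. Qed.

Section Bracket.

Variables (t D r : R).
Hypotheses (Ht : 0 < t < 1) (HD : 0 < D) (Hr : 0 < r)
  (HDr : 8 * D <= r ^ 2 * (t * (1 - t))).

Local Notation eps := (5 / 2 * sqrt D / r).
Local Notation lo := (sqrt (2 * D) / sqrt (1 + eps)).
Local Notation hi := (sqrt (2 * D) / sqrt (1 - eps)).

Lemma eps_bounds : 0 < eps < 1 / 2.
Proof.
  destruct (sqrt_pos_sq D HD) as [HS HS2].
  assert (Heps : eps * r = 5 / 2 * sqrt D) by (field; lra).
  assert (0 < eps) by (apply Rdiv_lt_0_compat; lra).
  pose proof (mul_one_sub_le_quarter t).
  assert (eps ^ 2 * r ^ 2 <= 25 / 128 * r ^ 2) by nra.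
  assert (eps ^ 2 <= 25 / 128) by nra.
  split; nra.
Qed.

Lemma lo_sq : lo ^ 2 * (1 + eps) = 2 * D.
Proof. pose proof eps_bounds. apply sqrt_div_sqrt_sq; lra. Qed.

Lemma hi_sq : hi ^ 2 * (1 - eps) = 2 * D.
Proof. pose proof eps_bounds. apply sqrt_div_sqrt_sq; lra. Qed.

Lemma lo_hi_bounds : 0 < lo < hi /\ (1 - t) * lo <= r / 4 /\ (1 - t) * hi < r.
Proof.
  pose proof eps_bounds. pose proof lo_sq. pose proof hi_sq.
  assert (Hlo : 0 < lo) by (apply Rdiv_lt_0_compat; apply sqrt_lt_R0; lra).
  assert (Hhi : 0 < hi) by (apply Rdiv_lt_0_compat; apply sqrt_lt_R0; lra).
  pose proof (mul_one_sub_le_quarter t).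
  assert (lo ^ 2 <= r ^ 2 / 16) by nra.
  assert (hi ^ 2 < r ^ 2) by nra.
  assert (lo ^ 2 < 2 * D) by nra.
  assert (2 * D < hi ^ 2) by nra.
  repeat split; try nra.
Qed.

Lemma upper_bound_at_lo : lo ^ 2 / 2 + 4 / 9 * (1 - t) ^ 2 * lo ^ 3 / r < D.
Proof.
  destruct (sqrt_pos_sq D HD) as [HS HS2].
  pose proof eps_bounds. pose proof lo_sq. destruct lo_hi_bounds as [[Hlo _] _].
  set (l := lo) in *. set (e := eps) in *.
  assert (l < 3 / 2 * sqrt D) by nra.
  assert (4 / 9 * (1 - t) ^ 2 * l < 5 / 4 * sqrt D) by nra.
  assert (4 / 9 * (1 - t) ^ 2 * l ^ 3 / r < e * l ^ 2 / 2).
  { replace (4 / 9 * (1 - t) ^ 2 * l ^ 3 / r)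
      with (4 / 9 * (1 - t) ^ 2 * l * (l ^ 2 / r)) by (field; lra).
    replace (e * l ^ 2 / 2) with (5 / 4 * sqrt D * (l ^ 2 / r)) by (unfold e; field; lra).
    apply Rmult_lt_compat_r; [apply Rdiv_lt_0_compat|]; nra. }
  nra.
Qed.

Lemma lower_bound_at_hi : D < hi ^ 2 / 2 - t ^ 2 * hi ^ 3 / (3 * r).
Proof.
  destruct (sqrt_pos_sq D HD) as [HS HS2].
  pose proof eps_bounds. pose proof hi_sq. destruct lo_hi_bounds as [[? ?] _].
  set (h := hi) in *. set (e := eps) in *.
  assert (h ^ 2 < 4 * sqrt D ^ 2) by nra.
  assert (h < 2 * sqrt D) by nra.
  assert (t ^ 2 < 1) by nra.
  assert (t ^ 2 * h < 15 / 4 * sqrt D) by nra.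
  assert (t ^ 2 * h ^ 3 / (3 * r) < e * h ^ 2 / 2).
  { replace (t ^ 2 * h ^ 3 / (3 * r)) with (t ^ 2 * h * (h ^ 2 / (3 * r)))
      by (field; lra).
    replace (e * h ^ 2 / 2) with (15 / 4 * sqrt D * (h ^ 2 / (3 * r))) by (unfold e; field; lra).
    apply Rmult_lt_compat_r; [apply Rdiv_lt_0_compat|]; nra. }
  nra.
Qed.

End Bracket.

Theorem mainTheorem12 (n : nat) (th alpha : R) (z : Z) :
  (1 <= n)%nat -> 0 < th -> th < 1 -> INR n * th = IZR z -> 0 < alpha ->
  alpha + DeltaPBR n th <= INR n * th ^ 2 * (1 - th) ^ 2 / 8 ->
  let eps := 5 / 2 * sqrt (alpha + DeltaPBR n th) / sqrt (INR n * th * (1 - th)) in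
  exists g : R, 0 < g /\
    - ln (P_PBR n th (phiPBR n g th)) = alpha /\
    sqrt (2 * (alpha + DeltaPBR n th)) / sqrt (1 + eps) <= g /\
    g <= sqrt (2 * (alpha + DeltaPBR n th)) / sqrt (1 - eps).
Proof.
  intros Hn Hth0 Hth1 Hz Halpha HD eps. subst eps.
  assert (Hth : 0 < th < 1) by lra.
  pose proof (nt_of_integral n th z Hth0 Hz) as Hk.
  destruct (sqrt_pos_sq _ (variance_scale_pos n th Hn Hth)) as [Hr Hr2].
  set (D := alpha + DeltaPBR n th) in *.
  set (r := sqrt (INR n * th * (1 - th))) in *.
  assert (HD0 : 0 < D) by (pose proof (DeltaPBR_ge0 n th Hth Hk); unfold D; lra).
  assert (HDr : 8 * D <= r ^ 2 * (th * (1 - th))) by (rewrite Hr2; lra).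
  destruct (lo_hi_bounds th D r Hth HD0 Hr HDr) as [[Hlo Hlohi] [Hsmall_lo Hsmall_hi]].
  pose proof (upper_bound_at_lo th D r Hth HD0 Hr HDr).
  pose proof (lower_bound_at_hi th D r Hth HD0 Hr HDr).
  set (lo := sqrt (2 * D) / sqrt (1 + 5 / 2 * sqrt D / r)) in *.
  set (hi := sqrt (2 * D) / sqrt (1 - 5 / 2 * sqrt D / r)) in *.
  pose proof (scaled_klBern_upper n th Hn Hth lo ltac:(lra) Hsmall_lo) as Hklo.
  pose proof (scaled_klBern_lower n th Hn Hth hi ltac:(lra) Hsmall_hi) as Hkhi.
  fold r in Hklo; fold r in Hkhi.
  destruct (scaled_klBern_attains n th Hn Hth D lo hi ltac:(lra) Hsmall_hi ltac:(lra))
    as [g [Hg HgD]].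
  exists g. split; [lra|]. split; [|exact Hg].
  rewrite neg_ln_P_PBR by (try assumption; apply phiPBR_in_range; auto; fold r; nra).
  unfold D in HgD. lra.
Qed.
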